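(* Let $\varphi_1(m,n)=(2m+n-1)/3$ and $\varphi_2(m,n)=(m+2n-2)/3$, and for a 4-tuple set $\varphi_i(a,b,c,d)=\varphi_i(a+b,c+d)$ and $\varphi_i(T)=\varphi_i(\lambda(T))$ for a tree $T$. Then: (i) If $\lambda(T)=(a,b,c,d)$ for a tree $T$, then $2m+n\equiv 1\pmod 3$, where $m=a+b$ and $n=c+d$. (ii) Every tree $T$ has exactly $\varphi_1(T)$ vertices of color $\alpha$, $\varphi_1(T)$ vertices of color $\beta$, $\varphi_2(T)$ vertices of color $\gamma$, and $\varphi_2(T)+1$ vertices of color $1$. (iii) In any nontrivial tree $T$, $\alpha^\#\le\varphi_1(T)$, $\beta^\#\le\varphi_1(T)$, $\gamma^\#\le\varphi_2(T)$ and $1^\#\le\varphi_2(T)$. (iv) A 4-tuple $(a,b,c,d)$ of nonnegative integers different from $(0,0,0,1)$ is representable iff $2a+2b+c+d\equiv1\pmod 3$, $a\le\varphi_1(a,b,c,d)$, $b\le\varphi_1(a,b,c,d)$, $c\le\varphi_2(a,b,c,d)$ and $d\le\varphi_2(a,b,c,d)$.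
   Context: A tree is a full binary tree: a finite rooted tree in which every non-leaf vertex has exactly two children, a left child and a right child; the trivial tree has one vertex. Let $\mathbf{KL}=\{1,\alpha,\beta,\gamma\}$ be the Klein 4-group ($\alpha^2=\beta^2=1$, $\alpha\beta=\gamma$). The vertices of a tree are colored by elements of $\mathbf{KL}$: the root has color $1$, a left child has $\alpha$ times the color of its parent, and a right child has $\beta$ times the color of its parent. For $g\in\mathbf{KL}$, $g^\#$ denotes the number of leaves of color $g$, and the total color of $T$ is $\lambda(T)=(\alpha^\#,\beta^\#,\gamma^\#,1^\#)$. A 4-tuple of natural numbers is representable if it equals $\lambda(T)$ for some tree $T$. *)

From HB Require Import structures.
From mathcomp Require Import all_boot all_order all_algebra.
Set Implicit Arguments. Unset Strict Implicit. Unset Printing Implicit Defensive.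
Import Order.TTheory GRing.Theory Num.Theory.

Inductive tree : Type := Leaf | Node of tree & tree.

Inductive KL : Type := K1 | Kalpha | Kbeta | Kgamma.

Definition KL_eqb (x y : KL) : bool :=
  match x, y with
  | K1, K1 | Kalpha, Kalpha | Kbeta, Kbeta | Kgamma, Kgamma => true
  | _, _ => false end.

Definition klmul (x y : KL) : KL :=
  match x, y with
  | K1, z | z, K1 => z
  | Kalpha, Kalpha | Kbeta, Kbeta | Kgamma, Kgamma => K1
  | Kalpha, Kbeta | Kbeta, Kalpha => Kgamma
  | Kalpha, Kgamma | Kgamma, Kalpha => Kbeta
  | Kbeta, Kgamma | Kgamma, Kbeta => Kalpha
  end.

Fixpoint leaves_col (g c : KL) (T : tree) : nat :=
  match T with
  | Leaf => if KL_eqb g c then 1 else 0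
  | Node l r => leaves_col g (klmul Kalpha c) l + leaves_col g (klmul Kbeta c) r
  end.

Fixpoint verts_col (g c : KL) (T : tree) : nat :=
  (if KL_eqb g c then 1 else 0) +
  match T with
  | Leaf => 0
  | Node l r => verts_col g (klmul Kalpha c) l + verts_col g (klmul Kbeta c) r
  end.

Definition nleaves (g : KL) (T : tree) : nat := leaves_col g K1 T.
Definition nverts (g : KL) (T : tree) : nat := verts_col g K1 T.

Definition lambda (T : tree) : nat * nat * nat * nat :=
  (nleaves Kalpha T, nleaves Kbeta T, nleaves Kgamma T, nleaves K1 T).

Definition representable (t : nat * nat * nat * nat) : Prop :=
  exists T : tree, lambda T = t.

Definition phi1 (m n : nat) : rat := ((2 * m + n)%:R - 1) / 3.
Definition phi2 (m n : nat) : rat := ((m + 2 * n)%:R - 2) / 3.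

Definition phi1_4 (t : nat * nat * nat * nat) : rat :=
  let: (a, b, c, d) := t in phi1 (a + b) (c + d).
Definition phi2_4 (t : nat * nat * nat * nat) : rat :=
  let: (a, b, c, d) := t in phi2 (a + b) (c + d).

Definition phi1T (T : tree) : rat := phi1_4 (lambda T).
Definition phi2T (T : tree) : rat := phi2_4 (lambda T).

From HB Require Import structures.
From mathcomp Require Import all_boot all_order all_algebra.
From mathcomp Require Import ring lra zify.
Set Implicit Arguments. Unset Strict Implicit. Unset Printing Implicit Defensive.
Import Order.TTheory GRing.Theory Num.Theory.
Local Open Scope ring_scope.

(* Colouring a tree from a root of colour x multiplies every colour by x, so the
   counts of a node are those of its children with the colours permuted. An
   induction then expresses the vertex counts through m = alpha# + beta# and
   n = gamma# + 1#, which gives (i) and (ii); (iii) follows since leaves are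
   vertices and the root of a nontrivial tree is an internal vertex of colour 1.
   Conversely, replacing a leaf of colour g by a cherry turns one g-leaf into an
   (alpha g)-leaf and a (beta g)-leaf. Every admissible tuple other than
   (1,1,0,0), the total colour of the cherry, arises in this way from an
   admissible tuple with one leaf fewer, which yields (iv) by induction. *)

Lemma klmulCA x y z : klmul x (klmul y z) = klmul y (klmul x z).
Proof. by case: x; case: y; case: z. Qed.

Lemma KL_eqb_mull x g c : KL_eqb g (klmul x c) = KL_eqb (klmul x g) c.
Proof. by case: x; case: g; case: c. Qed.

Lemma KL_eqb_mul2l x g c : KL_eqb (klmul x g) (klmul x c) = KL_eqb g c.
Proof. by case: x; case: g; case: c. Qed.

Lemma leaves_col_mull x g c T :
  leaves_col g (klmul x c) T = leaves_col (klmul x g) c T.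
Proof.
elim: T c => [|l IHl r IHr] c; first by rewrite /= KL_eqb_mull.
by congr (_ + _); rewrite klmulCA ?IHl ?IHr.
Qed.

Lemma verts_col_mull x g c T :
  verts_col g (klmul x c) T = verts_col (klmul x g) c T.
Proof.
elim: T c => [|l IHl r IHr] c; congr (_ + _); rewrite ?KL_eqb_mull //.
by congr (_ + _); rewrite klmulCA ?IHl ?IHr.
Qed.

Lemma nleaves_Node g l r :
  nleaves g (Node l r) =
  (nleaves (klmul Kalpha g) l + nleaves (klmul Kbeta g) r)%N.
Proof.
by rewrite /nleaves -[Kalpha]/(klmul Kalpha K1) -[Kbeta]/(klmul Kbeta K1)
  -!leaves_col_mull.
Qed.

Lemma nverts_Node g l r :
  nverts g (Node l r) =
  (KL_eqb g K1 + nverts (klmul Kalpha g) l + nverts (klmul Kbeta g) r)%N.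
Proof.
by rewrite /nverts -[Kalpha]/(klmul Kalpha K1) -[Kbeta]/(klmul Kbeta K1)
  -!verts_col_mull -addnA.
Qed.

Lemma nverts_nleaves T :
  let m := (nleaves Kalpha T + nleaves Kbeta T)%N in
  let n := (nleaves Kgamma T + nleaves K1 T)%N in
  [/\ (3 * nverts Kalpha T + 1 = 2 * m + n)%N,
      (3 * nverts Kbeta T + 1 = 2 * m + n)%N,
      (3 * nverts Kgamma T + 2 = m + 2 * n)%N &
      (3 * nverts K1 T = m + 2 * n + 1)%N].
Proof.
elim: T => [|l [IHl1 IHl2 IHl3 IHl4] r [IHr1 IHr2 IHr3 IHr4]] //=.
by rewrite !nverts_Node !nleaves_Node /=; split; lia.
Qed.

Lemma nleaves_le_nverts g T : (nleaves g T <= nverts g T)%N.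
Proof.
elim: T g => [|l IHl r IHr] g; first by rewrite /nleaves /nverts /= addn0.
rewrite nleaves_Node nverts_Node -addnA.
exact: leq_trans (leq_add (IHl _) (IHr _)) (leq_addl _ _).
Qed.

Lemma nleaves1_lt_nverts1_Node l r :
  (nleaves K1 (Node l r) < nverts K1 (Node l r))%N.
Proof.
by rewrite nleaves_Node nverts_Node -addnA add1n ltnS leq_add ?nleaves_le_nverts.
Qed.

Lemma phi1_nat V m n : (3 * V + 1 = 2 * m + n)%N -> phi1 m n = V%:R.
Proof. by rewrite /phi1 => <-; rewrite natrD natrM; field. Qed.

Lemma phi2_nat V m n : (3 * V + 2 = m + 2 * n)%N -> phi2 m n = V%:R.
Proof. by rewrite /phi2 => <-; rewrite natrD natrM; field. Qed.

Lemma ler_phi1 x m n : (x%:R <= phi1 m n) = (3 * x + 1 <= 2 * m + n)%N.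
Proof.
rewrite /phi1 ler_pdivlMr // lerBrDr -(ler_nat rat) !natrD.
by apply/idP/idP => ?; lra.
Qed.

Lemma ler_phi2 x m n : (x%:R <= phi2 m n) = (3 * x + 2 <= m + 2 * n)%N.
Proof.
rewrite /phi2 ler_pdivlMr // lerBrDr -(ler_nat rat) !natrD.
by apply/idP/idP => ?; lra.
Qed.

Lemma lambda_mod3 T a b c d : lambda T = (a, b, c, d) ->
  ((2 * (a + b) + (c + d)) %% 3 = 1)%N.
Proof.
rewrite /lambda => -[<- <- <- <-].
by have [Va _ _ _] := nverts_nleaves T; lia.
Qed.

Lemma nverts_phi T :
  (nverts Kalpha T)%:R = phi1T T /\ (nverts Kbeta T)%:R = phi1T T /\
  (nverts Kgamma T)%:R = phi2T T /\ (nverts K1 T)%:R = phi2T T + 1.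
Proof.
have [Va Vb Vg V1] := nverts_nleaves T.
rewrite /phi1T /phi2T /lambda /=.
split; first exact/esym/phi1_nat.
split; first exact/esym/phi1_nat.
split; first exact/esym/phi2_nat.
by rewrite (@phi2_nat (nverts K1 T).-1) ?natr1 ?prednK //; lia.
Qed.

Definition admissible (a b c d : nat) : Prop :=
  [/\ (2 * a + 2 * b + c + d) %% 3 = 1, 3 * a + 1 <= 2 * (a + b) + (c + d),
      3 * b + 1 <= 2 * (a + b) + (c + d), 3 * c + 2 <= (a + b) + 2 * (c + d) &
      3 * d + 2 <= (a + b) + 2 * (c + d)]%N.

Lemma admissible_phiE a b c d : admissible a b c d <->
  [/\ ((2 * a + 2 * b + c + d) %% 3 = 1)%N,
      a%:R <= phi1_4 (a, b, c, d), b%:R <= phi1_4 (a, b, c, d),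
      c%:R <= phi2_4 (a, b, c, d) & d%:R <= phi2_4 (a, b, c, d)].
Proof. by rewrite /phi1_4 /phi2_4 !ler_phi1 !ler_phi2. Qed.

Lemma admissible_Node l r : let T := Node l r in
  admissible (nleaves Kalpha T) (nleaves Kbeta T) (nleaves Kgamma T)
             (nleaves K1 T).
Proof.
move=> T; have [Va Vb Vg V1] := nverts_nleaves T.
have := nleaves1_lt_nverts1_Node l r; rewrite -/T.
have := nleaves_le_nverts Kalpha T; have := nleaves_le_nverts Kbeta T.
have := nleaves_le_nverts Kgamma T.
by split; lia.
Qed.

Lemma nleaves_le_phi_Node l r : let T := Node l r in
  (nleaves Kalpha T)%:R <= phi1T T /\ (nleaves Kbeta T)%:R <= phi1T T /\
  (nleaves Kgamma T)%:R <= phi2T T /\ (nleaves K1 T)%:R <= phi2T T.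
Proof. by have /admissible_phiE [] := admissible_Node l r. Qed.

Lemma nleaves_split_leaf g T : (0 < nleaves g T)%N -> exists T', forall h,
  (nleaves h T' + KL_eqb h g =
   nleaves h T + KL_eqb h (klmul Kalpha g) + KL_eqb h (klmul Kbeta g))%N.
Proof.
elim: T g => [|l IHl r IHr] g.
  by case: g => //= _; exists (Node Leaf Leaf) => h; case: h.
rewrite nleaves_Node.
case: (posnP (nleaves (klmul Kalpha g) l)) => [l0|/IHl [l' Hl'] _].
  rewrite l0 add0n => /IHr [r' Hr']; exists (Node l r') => h.
  move: (Hr' (klmul Kbeta h)).
  rewrite !nleaves_Node [klmul Kalpha (klmul Kbeta g)]klmulCA !KL_eqb_mul2l.
  lia.
exists (Node l' r) => h; move: (Hl' (klmul Kalpha h)).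
rewrite !nleaves_Node [klmul Kbeta (klmul Kalpha g)]klmulCA !KL_eqb_mul2l.
lia.
Qed.

Lemma representable_grow_alpha_beta a b c d :
  representable (a, b, c, d.+1) \/ representable (a, b, c.+1, d) ->
  representable (a.+1, b.+1, c, d).
Proof.
case=> -[T]; rewrite /lambda => -[Ea Eb Ec Ed];
  [have /(nleaves_split_leaf (g := K1)) [T' HT'] : (0 < nleaves K1 T)%N
     by rewrite Ed
  |have /(nleaves_split_leaf (g := Kgamma)) [T' HT'] : (0 < nleaves Kgamma T)%N
     by rewrite Ec];
  exists T'; move: (HT' Kalpha) (HT' Kbeta) (HT' Kgamma) (HT' K1) => /= *;
  rewrite /lambda; congr (_, _, _, _); lia.
Qed.

Lemma representable_grow_gamma_one a b c d :
  representable (a.+1, b, c, d) \/ representable (a, b.+1, c, d) ->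
  representable (a, b, c.+1, d.+1).
Proof.
case=> -[T]; rewrite /lambda => -[Ea Eb Ec Ed];
  [have /(nleaves_split_leaf (g := Kalpha)) [T' HT'] : (0 < nleaves Kalpha T)%N
     by rewrite Ea
  |have /(nleaves_split_leaf (g := Kbeta)) [T' HT'] : (0 < nleaves Kbeta T)%N
     by rewrite Eb];
  exists T'; move: (HT' Kalpha) (HT' Kbeta) (HT' Kgamma) (HT' K1) => /= *;
  rewrite /lambda; congr (_, _, _, _); lia.
Qed.

Lemma admissible_descent a b c d :
  admissible a b c d -> (a, b, c, d) <> (1, 1, 0, 0)%N ->
  [/\ 0 < a, 0 < b &
      admissible a.-1 b.-1 c d.+1 \/ admissible a.-1 b.-1 c.+1 d]%N \/
  [/\ 0 < c, 0 < d &
      admissible a.+1 b c.-1 d.-1 \/ admissible a b.+1 c.-1 d.-1]%N.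
Proof.
rewrite /admissible => -[? ? ? ? ?] Hne.
have {}Hne : ~ (a = 1 /\ b = 1 /\ c = 0 /\ d = 0)%N.
  by case=> Ea [Eb [Ec Ed]]; apply: Hne; rewrite Ea Eb Ec Ed.
(* Each inequality is the one constraint on the corresponding predecessor
   that does not hold automatically. *)
have : (0 < a /\ 0 < b /\ (d + 5 <= a + b + 2 * c \/ c + 5 <= a + b + 2 * d) \/
        0 < c /\ 0 < d /\ (a + 4 <= 2 * b + c + d \/ b + 4 <= 2 * a + c + d))%N.
  by lia.
case=> [[Ha [Hb [H|H]]]|[Hc [Hd [H|H]]]]; [left|left|right|right]; split => //;
  [left|right|left|right]; split; lia.
Qed.

Lemma admissible_representable a b c d :
  admissible a b c d -> representable (a, b, c, d).
Proof.
move: {2}(a + b + c + d)%N (leqnn (a + b + c + d)) => s.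
elim: s a b c d => [|s IHs] a b c d Hs Hadm.
  by case: Hadm; lia.
case: (eqVneq (a, b, c, d) (1, 1, 0, 0)%N) => [[-> -> -> ->]|/eqP Hne].
  by exists (Node Leaf Leaf).
case: (admissible_descent Hadm Hne) => [[Ha Hb H]|[Hc Hd H]].
  rewrite -(prednK Ha) -(prednK Hb); apply: representable_grow_alpha_beta.
  by case: H => H; [left|right]; apply: IHs H; lia.
rewrite -(prednK Hc) -(prednK Hd); apply: representable_grow_gamma_one.
by case: H => H; [left|right]; apply: IHs H; lia.
Qed.

Lemma representable_admissible a b c d : (a, b, c, d) <> (0, 0, 0, 1)%N ->
  representable (a, b, c, d) <-> admissible a b c d.
Proof.
move=> Hne; split; last exact: admissible_representable.
case=> -[|l r]; first by move=> HT; case: Hne; rewrite -HT.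
by rewrite /lambda => -[<- <- <- <-]; apply: admissible_Node.
Qed.

Theorem theorem4p1 :
  (forall (T : tree) (a b c d : nat), lambda T = (a, b, c, d) ->
     ((2 * (a + b) + (c + d)) %% 3 = 1)%N)
  /\
  (forall T : tree,
     (nverts Kalpha T)%:R = phi1T T /\
     (nverts Kbeta T)%:R = phi1T T /\
     (nverts Kgamma T)%:R = phi2T T /\
     (nverts K1 T)%:R = phi2T T + 1)
  /\
  (forall T1 T2 : tree, let T := Node T1 T2 in
     (nleaves Kalpha T)%:R <= phi1T T /\
     (nleaves Kbeta T)%:R <= phi1T T /\
     (nleaves Kgamma T)%:R <= phi2T T /\
     (nleaves K1 T)%:R <= phi2T T)
  /\
  (forall a b c d : nat, (a, b, c, d) <> (0, 0, 0, 1)%N ->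
     (representable (a, b, c, d) <->
       [/\ ((2 * a + 2 * b + c + d) %% 3 = 1)%N,
           a%:R <= phi1_4 (a, b, c, d),
           b%:R <= phi1_4 (a, b, c, d),
           c%:R <= phi2_4 (a, b, c, d) &
           d%:R <= phi2_4 (a, b, c, d)])).
Proof.
split; first exact: lambda_mod3.
split; first exact: nverts_phi.
split; first exact: nleaves_le_phi_Node.
move=> a b c d Hne; rewrite -admissible_phiE.
exact: representable_admissible.
Qed.
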